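(* Let $R=\mathbb{Z}[t]/(t^3)$ and let $p$ be a prime. Then, writing $X=p^{-s_1}$ and $Y=p^{-s_2}$, \[ \zeta_{R,p}(s_1,s_2)=\frac{1+X+pX^2-pX^3Y-p^2X^4Y-p^2X^5Y}{(1-XY)(1-pX^2Y)(1-p^2X^3)} . \] This holds as an identity of formal power series in $X,Y$, and hence as an identity of functions for all complex $s_1,s_2$ with real parts sufficiently large.
   Context: Let $R=\mathbb{Z}[t]/(t^3)$, viewed as the additive group $\mathbb{Z}^3$ with basis $t^2,t,1$. A subring $S$ of $R$ means an additive subgroup of finite index that contains $1$ and is closed under multiplication. For a finite-index subgroup $S\subseteq R$ there are unique positive integers $\alpha_1(S),\alpha_2(S),\alpha_3(S)$ with $\alpha_{i+1}\mid\alpha_i$ and $R/S\cong \mathbb{Z}/\alpha_1\mathbb{Z}\oplus\mathbb{Z}/\alpha_2\mathbb{Z}\oplus\mathbb{Z}/\alpha_3\mathbb{Z}$. The tuple $(\alpha_1(S),\alpha_2(S),\alpha_3(S))$ is called the cotype of $S$. For a subring $S$ one always has $\alpha_3(S)=1$. For a prime $p$ define \[ \zeta_{R,p}(s_1,s_2)=\sum_{S}\alpha_1(S)^{-s_1}\alpha_2(S)^{-s_2}, \] where the sum runs over all subrings $S$ of $R$ whose index $[R:S]$ is a power of $p$ (including index $1$). For such $S$ one has $\alpha_1(S)=p^a$ and $\alpha_2(S)=p^b$ for some $a,b\ge 0$, so $\zeta_{R,p}(s_1,s_2)$ is a power series in $X=p^{-s_1}$ and $Y=p^{-s_2}$. 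*)

From Stdlib Require Import ZArith List Znumtheory.
Import ListNotations.
Open Scope Z_scope.

(* R = Z[t]/(t^3) as Z^3; an element (c2, c1, c0) stands for c2 t^2 + c1 t + c0
   (basis t^2, t, 1). *)
Definition Z3 : Type := (Z * Z * Z)%type.

Definition r0 : Z3 := (0, 0, 0).
Definition r1 : Z3 := (0, 0, 1).
Definition radd (u v : Z3) : Z3 :=
  let '(a2, a1, a0) := u in let '(b2, b1, b0) := v in (a2 + b2, a1 + b1, a0 + b0).
Definition ropp (u : Z3) : Z3 := let '(a2, a1, a0) := u in (- a2, - a1, - a0).
Definition rmul (u v : Z3) : Z3 :=
  let '(a2, a1, a0) := u in let '(b2, b1, b0) := v in
  (a2 * b0 + a1 * b1 + a0 * b2, a1 * b0 + a0 * b1, a0 * b0).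

(* Z-bilinear pairing Z^3 x Z^3 -> Z, used to describe additive maps Z^3 -> Z *)
Definition dot (m u : Z3) : Z :=
  let '(m2, m1, m0) := m in let '(a2, a1, a0) := u in m2 * a2 + m1 * a1 + m0 * a0.

Definition subset3 := Z3 -> Prop.
Definition same (S T : subset3) : Prop := forall x, S x <-> T x.

Definition is_subgroup (S : subset3) : Prop :=
  S r0 /\ (forall u v, S u -> S v -> S (radd u v)) /\ (forall u, S u -> S (ropp u)).

(* R / S is isomorphic to Z/a1 (+) Z/a2 (+) Z/a3 with a3 | a2 | a1, all positive.
   Every additive map Z^3 -> Z/a1 x Z/a2 x Z/a3 is u |-> (m1.u, m2.u, m3.u) mod (a1,a2,a3);
   such a map is surjective with kernel S iff it induces an iso R/S ~ product. *)
Definition has_cotype (S : subset3) (a1 a2 a3 : Z) : Prop :=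
  0 < a3 /\ (a3 | a2) /\ (a2 | a1) /\
  exists m1 m2 m3 : Z3,
    (forall y1 y2 y3 : Z, exists u : Z3,
        (a1 | dot m1 u - y1) /\ (a2 | dot m2 u - y2) /\ (a3 | dot m3 u - y3)) /\
    (forall u : Z3, S u <-> ((a1 | dot m1 u) /\ (a2 | dot m2 u) /\ (a3 | dot m3 u))).

(* Finite-index subgroup containing 1 and closed under multiplication. *)
Definition is_subring (S : subset3) : Prop :=
  is_subgroup S /\ (exists a1 a2 a3, has_cotype S a1 a2 a3) /\
  S r1 /\ (forall u v, S u -> S v -> S (rmul u v)).

Definition count_is (P : subset3 -> Prop) (n : nat) : Prop :=
  exists L : list subset3,
    length L = n /\
    (forall S, In S L -> P S) /\
    (forall S, P S -> exists T, In T L /\ same S T) /\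
    ForallOrdPairs (fun S T => ~ same S T) L.

(* Formal power series in X, Y with integer coefficients: f a b = coeff of X^a Y^b. *)
Definition fps := nat -> nat -> Z.

Fixpoint zsum (n : nat) (f : nat -> Z) : Z :=
  match n with O => 0 | S k => zsum k f + f k end.

Definition fmul (f g : fps) : fps := fun a b =>
  zsum (S a) (fun i => zsum (S b) (fun j => f i j * g (a - i)%nat (b - j)%nat)).
Definition fadd (f g : fps) : fps := fun a b => f a b + g a b.
Definition mono (c : Z) (i j : nat) : fps := fun a b =>
  if (Nat.eqb a i && Nat.eqb b j)%bool then c else 0.

Definition zeta_num (p : Z) : fps :=
  fadd (mono 1 0 0) (fadd (mono 1 1 0) (fadd (mono p 2 0)
    (fadd (mono (- p) 3 1) (fadd (mono (- p ^ 2) 4 1) (mono (- p ^ 2) 5 1))))).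

Definition zeta_den (p : Z) : fps :=
  fmul (fadd (mono 1 0 0) (mono (-1) 1 1))
       (fmul (fadd (mono 1 0 0) (mono (- p) 2 1))
             (fadd (mono 1 0 0) (mono (- p ^ 2) 3 0))).

From Stdlib Require Import ZArith List Znumtheory Lia Classical.
Import ListNotations.
Open Scope Z_scope.

(* For a set S of cotype (p^a, p^b, _), p^a is the exponent
      of R/S ([cotype_exponent]) and p^b is the least n such that n R lies in
      S + Z w for some w ([cotype_second], via a 2x2 determinant argument), so the
      exponents (a, b) are determined by S ([cotype_unique]).
   2. Normal form.  Every subring of p-power cotype equals a lattice
      [hnf (p^i) be (p^j)] = span(1, p^j t + be t^2, p^i t^2) with i <= 2j and
      0 <= be < p^i ([subring_normal_form]); conversely these lattices are subrings
      ([hnf_subring]) and pairwise distinct ([hnf_inj]).  Their cotype depends on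
      the valuation of be ([hnf_cotype_divisible], [hnf_cotype_zero],
      [hnf_cotype_unit]).
   3. Counting.  Grouping the normal forms by cotype gives explicit lists
      [normal_forms a b] of three families, whose lengths have a closed form
      [subring_count a b] ([count_subrings], [length_normal_forms]).
   4. Generating function.  Multiplying the closed form by
      (1 - p X^2 Y)(1 - p^2 X^3) and then by (1 - XY) gives the numerator; these
      are piecewise identities in the coordinates (b, a - b), checked by case
      analysis ([zeta_identity]). *)

Lemma least_nat (Q : nat -> Prop) n :
  Q n -> exists m, Q m /\ forall k, (k < m)%nat -> ~ Q k.
Proof.
  revert Q. induction n as [n IH] using (well_founded_induction lt_wf). intros Q Hn.
  destruct (classic (exists k, (k < n)%nat /\ Q k)) as [[k [Hk HQ]]|Hno].
  - exact (IH k Hk Q HQ).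
  - exists n. split; [exact Hn|]. intros k Hk HQ. apply Hno. eauto.
Qed.

Definition smul (k : Z) (u : Z3) : Z3 := let '(a, b, c) := u in (k * a, k * b, k * c).
Definition lc (k : Z) (u : Z3) (l : Z) (v : Z3) : Z3 := radd (smul k u) (smul l v).

Lemma dot_lc m k u l v : dot m (lc k u l v) = k * dot m u + l * dot m v.
Proof. destruct m as [[? ?] ?], u as [[? ?] ?], v as [[? ?] ?]; simpl; ring. Qed.

Lemma dot_smul m k u : dot m (smul k u) = k * dot m u.
Proof. destruct m as [[? ?] ?], u as [[? ?] ?]; simpl; ring. Qed.

Lemma triple_eq (a b c a' b' c' : Z) :
  a = a' -> b = b' -> c = c' -> ((a, b, c) : Z3) = (a', b', c').
Proof. intros; subst; reflexivity. Qed.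

Lemma mem_eq (T : subset3) u v : T u -> u = v -> T v.
Proof. intros; subst; assumption. Qed.

Ltac triple_ring := cbn [lc radd smul rmul r1]; apply triple_eq; ring.

Lemma cotype_lc T a1 a2 a3 u v k l :
  has_cotype T a1 a2 a3 -> T u -> T v -> T (lc k u l v).
Proof.
  intros [_ [_ [_ [m1 [m2 [m3 [_ HT]]]]]]] Hu Hv.
  apply HT in Hu as [? [? ?]]. apply HT in Hv as [? [? ?]]. apply HT. rewrite !dot_lc.
  split; [|split]; apply Z.divide_add_r; apply Z.divide_mul_r; assumption.
Qed.

Lemma cotype_exponent T a1 a2 a3 n :
  has_cotype T a1 a2 a3 -> ((forall u, T (smul n u)) <-> (a1 | n)).
Proof.
  intros [_ [H32 [H21 [m1 [m2 [m3 [Hsurj HT]]]]]]]. split.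
  - intros Hn. destruct (Hsurj 1 0 0) as [e [[q Hq] _]].
    specialize (Hn e). apply HT in Hn as [Hn _]. rewrite dot_smul in Hn.
    replace n with (n * dot m1 e - n * q * a1) by (rewrite <- Z.mul_assoc, <- Hq; ring).
    apply Z.divide_sub_r; [assumption|apply Z.divide_mul_r, Z.divide_refl].
  - intros Hn u. apply HT. rewrite !dot_smul.
    split; [|split]; apply Z.divide_mul_l; eauto using Z.divide_trans.
Qed.

Lemma cotype_same T U a1 a2 a3 :
  has_cotype T a1 a2 a3 -> same T U -> has_cotype U a1 a2 a3.
Proof.
  intros [H1 [H2 [H3 [m1 [m2 [m3 [Hs HT]]]]]]] HTU.
  repeat split; auto. exists m1, m2, m3. split; [exact Hs|].
  intros u. rewrite <- (HTU u). apply HT.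
Qed.

(* [hnf al be ga] is the subgroup of R spanned by 1, ga t + be t^2 and al t^2:
   { x2 t^2 + x1 t + x0 | x1 = ga y, x2 = be y mod al }.  Every subring of
   p-power index is of this form (see [subring_normal_form] below). *)
Definition hnf (al be ga : Z) : subset3 := fun u =>
  let '(x2, x1, x0) := u in exists y, x1 = ga * y /\ (al | x2 - be * y).

(* Since (be t^2 + ga t)^2 = ga^2 t^2 in R, the lattice is a subring as soon as
   al | ga^2. *)
Lemma hnf_subring al be ga a1 a2 a3 :
  (al | ga * ga) -> has_cotype (hnf al be ga) a1 a2 a3 -> is_subring (hnf al be ga).
Proof.
  intros Hal Hc.
  assert (H0 : hnf al be ga r0) by (exists 0; split; [ring|]; rewrite Z.mul_0_r; apply Z.divide_0_r).
  split; [|split; [eauto|split]].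
  - split; [exact H0|split].
    + intros [[x2 x1] x0] [[y2 y1] y0] [y [-> Hd]] [y' [-> Hd']]. exists (y + y'). split; [ring|].
      replace (x2 + y2 - be * (y + y')) with ((x2 - be * y) + (y2 - be * y')) by ring.
      apply Z.divide_add_r; assumption.
    + intros [[x2 x1] x0] [y [-> Hd]]. exists (- y). split; [ring|].
      replace (- x2 - be * - y) with (- (x2 - be * y)) by ring. apply Z.divide_opp_r; assumption.
  - exact H0.
  - intros [[x2 x1] x0] [[y2 y1] y0] [y [-> Hd]] [y' [-> Hd']]. cbn [rmul hnf].
    exists (y * y0 + y' * x0). split; [ring|].
    replace (x2 * y0 + ga * y * (ga * y') + x0 * y2 - be * (y * y0 + y' * x0))
      with (y0 * (x2 - be * y) + x0 * (y2 - be * y') + (ga * ga) * (y * y')) by ring.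
    repeat apply Z.divide_add_r; apply Z.divide_mul_r + apply Z.divide_mul_l; assumption.
Qed.

Lemma hnf_inj al be ga al' be' ga' :
  0 < al -> 0 < ga -> 0 <= be < al -> 0 < al' -> 0 < ga' -> 0 <= be' < al' ->
  same (hnf al be ga) (hnf al' be' ga') -> al = al' /\ be = be' /\ ga = ga'.
Proof.
  intros Hal Hga Hbe Hal' Hga' Hbe' Hs.
  assert (Hal_div : forall al be ga al' be' ga', 0 < ga' ->
            same (hnf al be ga) (hnf al' be' ga') -> (al' | al)).
  { intros al0 be0 ga0 al1 be1 ga1 Hg Hs0.
    destruct (proj1 (Hs0 (al0, 0, 0))) as [y [Hy Hd]].
    - exists 0. split; [ring|]. rewrite Z.mul_0_r, Z.sub_0_r. apply Z.divide_refl.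
    - replace y with 0 in Hd by nia. rewrite Z.mul_0_r, Z.sub_0_r in Hd. exact Hd. }
  assert (Hga_div : forall al be ga al' be' ga',
            same (hnf al be ga) (hnf al' be' ga') -> (ga' | ga)).
  { intros al0 be0 ga0 al1 be1 ga1 Hs0.
    destruct (proj1 (Hs0 (be0, ga0, 0))) as [y [Hy _]].
    - exists 1. split; [ring|]. rewrite Z.mul_1_r, Z.sub_diag. apply Z.divide_0_r.
    - exists y. lia. }
  assert (Hs' : same (hnf al' be' ga') (hnf al be ga)) by (intro u; symmetry; apply Hs).
  assert (Eal : al = al') by (apply Z.divide_antisym_nonneg; eauto with zarith).
  assert (Ega : ga = ga') by (apply Z.divide_antisym_nonneg; eauto with zarith).
  subst al' ga'. split; [reflexivity|split; [|reflexivity]].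
  destruct (proj1 (Hs (be, ga, 0))) as [y [Hy [c Hc]]].
  - exists 1. split; [ring|]. rewrite Z.mul_1_r, Z.sub_diag. apply Z.divide_0_r.
  - replace y with 1 in Hc by nia. assert (c = 0) by nia. subst c. lia.
Qed.

Lemma hnf_cotype_divisible al ga t :
  (ga | al) -> has_cotype (hnf al (ga * t) ga) al ga 1.
Proof.
  intros Hga. split; [lia|split; [apply Z.divide_1_l|split; [exact Hga|]]].
  exists (1, -t, 0), (0, 1, 0), (0, 0, 0). split.
  - intros y1 y2 y3. exists (y1 + t * y2, y2, 0). cbn [dot].
    split; [|split]; [exists 0 | exists 0 | apply Z.divide_1_l]; ring.
  - intros [[x2 x1] x0]. cbn [dot hnf]. split.
    + intros [y [-> Hd]]. split; [|split; [|apply Z.divide_1_l]].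
      * replace (1 * x2 + - t * (ga * y) + 0 * x0) with (x2 - ga * t * y) by ring. exact Hd.
      * exists y. ring.
    + intros [Hd [[y Hy] _]]. exists y. split; [lia|].
      replace (x2 - ga * t * y) with (1 * x2 + - t * x1 + 0 * x0) by lia. exact Hd.
Qed.

Lemma hnf_cotype_zero al ga :
  (al | ga) -> has_cotype (hnf al 0 ga) ga al 1.
Proof.
  intros Hal. split; [lia|split; [apply Z.divide_1_l|split; [exact Hal|]]].
  exists (0, 1, 0), (1, 0, 0), (0, 0, 0). split.
  - intros y1 y2 y3. exists (y2, y1, 0). cbn [dot].
    split; [|split]; [exists 0 | exists 0 | apply Z.divide_1_l]; ring.
  - intros [[x2 x1] x0]. cbn [dot hnf]. split.
    + intros [y [-> Hd]]. split; [|split; [|apply Z.divide_1_l]].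
      * exists y. ring.
      * replace (1 * x2 + 0 * (ga * y) + 0 * x0) with (x2 - 0 * y) by ring. exact Hd.
    + intros [[y Hy] [Hd _]]. exists y. split; [lia|].
      replace (x2 - 0 * y) with (1 * x2 + 0 * x1 + 0 * x0) by ring. exact Hd.
Qed.

Lemma NoDup_flat_map {A B} (f : A -> list B) (l : list A) :
  NoDup l -> (forall x, In x l -> NoDup (f x)) ->
  (forall x y z, In x l -> In y l -> In z (f x) -> In z (f y) -> x = y) ->
  NoDup (flat_map f l).
Proof.
  induction l as [|x l IH]; intros Hl Hf Hd; simpl; [constructor|].
  inversion Hl; subst. apply NoDup_app.
  - apply Hf; simpl; auto.
  - apply IH; [assumption| |]; intros; [apply Hf|eapply Hd]; simpl; eauto.
  - intros z Hz Hz'. apply in_flat_map in Hz' as [y [Hy Hzy]].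
    assert (x = y) by (eapply Hd; simpl; eauto). subst. contradiction.
Qed.

Definition zrange (m : Z) (n : nat) : list Z := map (fun k => m + Z.of_nat k) (seq 0 n).

Lemma in_zrange t m n : In t (zrange m n) <-> m <= t < m + Z.of_nat n.
Proof.
  unfold zrange. rewrite in_map_iff. split.
  - intros [x [<- Hx]]. apply in_seq in Hx. lia.
  - intros H. exists (Z.to_nat (t - m)). split; [lia|]. apply in_seq. lia.
Qed.

Lemma NoDup_zrange m n : NoDup (zrange m n).
Proof.
  apply NoDup_map_NoDup_ForallPairs; [|apply seq_NoDup]. intros x y _ _ H. lia.
Qed.

Lemma length_zrange m n : length (zrange m n) = n.
Proof. unfold zrange. rewrite length_map, length_seq. reflexivity. Qed.

Lemma zsum_ext n f g : (forall k, (k < n)%nat -> f k = g k) -> zsum n f = zsum n g.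
Proof. induction n; intros H; simpl; [reflexivity|]. rewrite IHn, H; auto. Qed.

Lemma zsum_add n f g : zsum n (fun k => f k + g k) = zsum n f + zsum n g.
Proof. induction n; simpl; [reflexivity|]. rewrite IHn. ring. Qed.

Lemma zsum_zero n f : (forall k, (k < n)%nat -> f k = 0) -> zsum n f = 0.
Proof. induction n; intros H; simpl; [reflexivity|]. rewrite IHn, H; auto. Qed.

Lemma zsum_single n f k :
  (k < n)%nat -> (forall i, (i < n)%nat -> i <> k -> f i = 0) -> zsum n f = f k.
Proof.
  induction n; intros Hk H; [lia|]. simpl.
  destruct (Nat.eq_dec k n) as [->|Hkn].
  - rewrite zsum_zero; [ring|]. intros; apply H; lia.
  - rewrite (H n), IHn; [ring|lia|intros; apply H; lia|lia|auto].
Qed.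

Lemma fmul_mono_l c i0 j0 g a b :
  fmul (mono c i0 j0) g a b =
  if andb (i0 <=? a)%nat (j0 <=? b)%nat then c * g (a - i0)%nat (b - j0)%nat else 0.
Proof.
  unfold fmul, mono. destruct (Nat.leb_spec i0 a); cbn [andb].
  - rewrite (zsum_single _ _ i0); [|lia|].
    + destruct (Nat.leb_spec j0 b).
      * rewrite (zsum_single _ _ j0); [|lia|].
        -- rewrite !Nat.eqb_refl. reflexivity.
        -- intros j _ Hj. apply Nat.eqb_neq in Hj. rewrite Nat.eqb_refl, Hj. reflexivity.
      * apply zsum_zero. intros j Hj. destruct (Nat.eqb_spec j j0); [lia|].
        rewrite Nat.eqb_refl. reflexivity.
    + intros i _ Hi. apply zsum_zero. intros j _. apply Nat.eqb_neq in Hi. rewrite Hi. reflexivity.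
  - apply zsum_zero. intros i Hi. apply zsum_zero. intros j _.
    destruct (Nat.eqb_spec i i0); [lia|]. reflexivity.
Qed.

Lemma fmul_fadd_l f g h a b : fmul (fadd f g) h a b = fmul f h a b + fmul g h a b.
Proof.
  unfold fmul, fadd. rewrite <- zsum_add. apply zsum_ext. intros i _.
  rewrite <- zsum_add. apply zsum_ext. intros j _. ring.
Qed.

Lemma fmul_ext f f' g g' a b :
  (forall i j, f i j = f' i j) -> (forall i j, g i j = g' i j) -> fmul f g a b = fmul f' g' a b.
Proof.
  intros Hf Hg. unfold fmul. apply zsum_ext. intros i _. apply zsum_ext. intros j _.
  rewrite Hf, Hg. reflexivity.
Qed.

Lemma ForallOrdPairs_map_distinct {A} (f : A -> subset3) (l : list A) :
  NoDup l -> (forall x y, In x l -> In y l -> same (f x) (f y) -> x = y) ->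
  ForallOrdPairs (fun S T => ~ same S T) (map f l).
Proof.
  induction l as [|x l IH]; intros Hn Hi; simpl; constructor; inversion Hn; subst.
  - apply Forall_forall. intros T HT. apply in_map_iff in HT as [y [<- Hy]].
    intros Hs. assert (x = y) by (apply Hi; simpl; auto). subst. contradiction.
  - apply IH; [assumption|]. intros; apply Hi; simpl; auto.
Qed.

Section PrimePowers.
Variable p : Z.
Hypothesis hp : prime p.

Lemma p_gt1 : 1 < p. Proof. destruct hp; lia. Qed.

Definition ppow (n : nat) : Z := p ^ Z.of_nat n.

Lemma ppow_0 : ppow 0 = 1. Proof. reflexivity. Qed.

Lemma ppow_pos n : 0 < ppow n.
Proof. apply Z.pow_pos_nonneg; pose proof p_gt1; lia. Qed.

Lemma ppow_add m n : ppow (m + n) = ppow m * ppow n.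
Proof. unfold ppow. rewrite Nat2Z.inj_add. apply Z.pow_add_r; lia. Qed.

Lemma ppow_S n : ppow (S n) = p * ppow n.
Proof. unfold ppow. rewrite Nat2Z.inj_succ, Z.pow_succ_r; lia. Qed.

Lemma ppow_lt m n : (m < n)%nat -> ppow m < ppow n.
Proof. intros. apply Z.pow_lt_mono_r; pose proof p_gt1; lia. Qed.

Lemma ppow_lt_inv m n : ppow m < ppow n -> (m < n)%nat.
Proof.
  intros H. destruct (Nat.lt_ge_cases m n) as [|Hnm]; [assumption|].
  assert (ppow n <= ppow m) by (apply Z.pow_le_mono_r; pose proof p_gt1; lia). lia.
Qed.

Lemma ppow_split m n : (m <= n)%nat -> ppow n = ppow m * ppow (n - m).
Proof. intros. rewrite <- ppow_add. f_equal. lia. Qed.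

Lemma ppow_divide m n : (m <= n)%nat -> (ppow m | ppow n).
Proof. intros. rewrite (ppow_split m n) by assumption. apply Z.divide_factor_l. Qed.

Lemma ppow_divide_inv m n : (ppow m | ppow n) -> (m <= n)%nat.
Proof.
  intros H. apply Z.divide_pos_le in H; [|apply ppow_pos].
  destruct (Nat.le_gt_cases m n) as [|Hnm]; [assumption|].
  apply ppow_lt in Hnm. lia.
Qed.

Lemma ppow_inj m n : ppow m = ppow n -> m = n.
Proof. intros H. apply Nat.le_antisymm; apply ppow_divide_inv; rewrite H; apply Z.divide_refl. Qed.

Lemma rel_prime_ppow d n : ~ (p | d) -> rel_prime d (ppow n).
Proof.
  intros H. induction n as [|n IH].
  - rewrite ppow_0. apply rel_prime_sym, rel_prime_1.
  - rewrite ppow_S. apply rel_prime_mult; [|exact IH].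
    apply rel_prime_sym, prime_rel_prime; assumption.
Qed.

Lemma divisor_ppow d n : 0 <= d -> (d | ppow n) -> exists k, d = ppow k.
Proof.
  revert d. induction n as [|n IH]; intros d Hd H.
  - exists 0%nat. apply Z.divide_1_r_nonneg; assumption.
  - destruct (Zdivide_dec p d) as [[d' ->]|Hnd].
    + rewrite ppow_S, (Z.mul_comm d' p) in H.
      apply Z.mul_divide_cancel_l in H; [|pose proof p_gt1; lia].
      destruct (IH d') as [k ->]; [pose proof p_gt1; nia|exact H|].
      exists (S k). rewrite ppow_S. ring.
    + exists 0%nat. apply Z.divide_1_r_nonneg; [assumption|].
      apply (Gauss d (ppow (S n)) 1); [rewrite Z.mul_1_r; exact H|].
      apply rel_prime_ppow; assumption.
Qed.

Lemma gcd_ppow x n : exists k, Z.gcd x (ppow n) = ppow k.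
Proof.
  apply (divisor_ppow _ n); [apply Z.gcd_nonneg|apply Z.gcd_divide_r].
Qed.

Lemma valuation n : n <> 0 -> exists c r, n = ppow c * r /\ ~ (p | r).
Proof.
  intros Hn. remember (Z.abs_nat n) as m. revert n Hn Heqm.
  induction m as [m IH] using (well_founded_induction lt_wf). intros n Hn Hm.
  destruct (Zdivide_dec p n) as [[n' ->]|Hd].
  - destruct (IH (Z.abs_nat n')) with n' as [c [r [Hr1 Hr2]]]; [|lia|reflexivity|].
    + subst m. pose proof p_gt1. rewrite Zabs2Nat.inj_mul. nia.
    + exists (S c), r. split; [rewrite ppow_S, Hr1; ring|exact Hr2].
  - exists 0%nat, n. split; [rewrite ppow_0; ring|exact Hd].
Qed.

Lemma ppow_generator (Q : Z -> Prop) a :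
  (forall x y u v, Q x -> Q y -> Q (u * x + v * y)) -> Q (ppow a) ->
  exists i, Q (ppow i) /\ forall x, Q x -> (ppow i | x).
Proof.
  intros Hlin Ha. destruct (least_nat (fun i => Q (ppow i)) a Ha) as [i [Hi Hmin]].
  exists i. split; [exact Hi|]. intros x Hx.
  destruct (gcd_ppow x i) as [k Hk].
  destruct (Zis_gcd_bezout _ _ _ (Zgcd_is_gcd x (ppow i))) as [u v Huv].
  assert (Hqk : Q (ppow k)) by (rewrite <- Hk, <- Huv; apply Hlin; assumption).
  assert (Hki : (k <= i)%nat) by (apply ppow_divide_inv; rewrite <- Hk; apply Z.gcd_divide_r).
  replace i with k by (destruct (Nat.lt_ge_cases k i); [exfalso; eapply Hmin; eauto|lia]).
  rewrite <- Hk. apply Z.gcd_divide_l.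
Qed.

(* If u = v = n mod p^b and p^(2b) | u v, then p^b | n (peel off one factor p
   at a time: p | u v forces p | n, hence p | u and p | v). *)
Lemma ppow_square_congr b : forall n u v,
  (ppow b * ppow b | u * v) -> (ppow b | u - n) -> (ppow b | v - n) -> (ppow b | n).
Proof.
  induction b as [|b IH]; intros n u v Huv Hu Hv; [apply Z.divide_1_l|].
  rewrite ppow_S in *.
  pose proof p_gt1 as Hp1.
  assert (Hpn : (p | n)).
  { assert (Hp : (p | u * v)) by
      (apply Z.divide_trans with (p * ppow b * (p * ppow b)); [exists (ppow b * (p * ppow b)); ring|exact Huv]).
    assert (Hpu : (p | u - n)) by (apply Z.divide_trans with (p * ppow b); [apply Z.divide_factor_l|exact Hu]).
    assert (Hpv : (p | v - n)) by (apply Z.divide_trans with (p * ppow b); [apply Z.divide_factor_l|exact Hv]).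
    apply (prime_mult p hp) in Hp as [Hp|Hp].
    - replace n with (u - (u - n)) by ring. apply Z.divide_sub_r; assumption.
    - replace n with (v - (v - n)) by ring. apply Z.divide_sub_r; assumption. }
  destruct Hpn as [n' ->].
  assert (Hdiv : forall w, (p * ppow b | w - n' * p) -> exists w', w = w' * p /\ (ppow b | w' - n')).
  { intros w [c Hc]. exists (c * ppow b + n'). split; [lia|]. exists c. ring. }
  destruct (Hdiv u Hu) as [u' [-> Hu']]. destruct (Hdiv v Hv) as [v' [-> Hv']].
  rewrite (Z.mul_comm n' p). apply Z.mul_divide_mono_l. apply (IH n' u' v'); [|exact Hu'|exact Hv'].
  apply (Z.mul_divide_cancel_l _ _ (p * p)); [nia|].
  replace (p * p * (ppow b * ppow b)) with (p * ppow b * (p * ppow b)) by ring.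
  replace (p * p * (u' * v')) with (u' * p * (v' * p)) by ring. exact Huv.
Qed.

Lemma divide_mul_both (a b c d : Z) : (a | b) -> (c | d) -> (a * c | b * d).
Proof. intros [x ->] [y ->]. exists (x * y). ring. Qed.

(* "n R is contained in S + Z w for some w", i.e. R/S has a cyclic subgroup whose
   quotient is killed by n; for S of cotype (a1, a2, a3) this holds iff a2 | n. *)
Definition cyclic_mod (T : subset3) (n : Z) : Prop :=
  exists w, forall u, exists k, T (lc n u (- k) w).

(* In Z/p^a x Z/p^b the images n e1, n e2 of the standard generators would be
   multiples k1 w, k2 w, and the 2x2 determinant identity
   (k1 w1)(k2 w2) = (k1 w2)(k2 w1) forces p^b | n by [ppow_square_congr]. *)
Lemma cotype_second T a b a3 n :
  has_cotype T (ppow a) (ppow b) a3 -> (cyclic_mod T n <-> (ppow b | n)).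
Proof.
  intros [_ [H32 [H21 [m1 [m2 [m3 [Hsurj HT]]]]]]]. split.
  - intros [w Hw].
    destruct (Hsurj 1 0 0) as [e1 [E11 [E12 _]]]. destruct (Hsurj 0 1 0) as [e2 [E21 [E22 _]]].
    rewrite Z.sub_0_r in E12, E21.
    destruct (Hw e1) as [k1 Hk1]. destruct (Hw e2) as [k2 Hk2].
    apply HT in Hk1 as [D11 [D12 _]]. apply HT in Hk2 as [D21 [D22 _]].
    rewrite !dot_lc in D11, D12, D21, D22.
    assert (Hab : forall x, (ppow a | x) -> (ppow b | x)) by eauto using Z.divide_trans.
    apply Hab in E11, E21, D11, D21.
    apply (ppow_square_congr b n (k1 * dot m1 w) (k2 * dot m2 w)).
    + replace (k1 * dot m1 w * (k2 * dot m2 w)) with ((k1 * dot m2 w) * (k2 * dot m1 w)) by ring.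
      apply divide_mul_both.
      * replace (k1 * dot m2 w) with (n * dot m2 e1 - (n * dot m2 e1 + - k1 * dot m2 w)) by ring.
        apply Z.divide_sub_r; [apply Z.divide_mul_r|]; assumption.
      * replace (k2 * dot m1 w) with (n * dot m1 e2 - (n * dot m1 e2 + - k2 * dot m1 w)) by ring.
        apply Z.divide_sub_r; [apply Z.divide_mul_r|]; assumption.
    + replace (k1 * dot m1 w - n) with (n * (dot m1 e1 - 1) - (n * dot m1 e1 + - k1 * dot m1 w)) by ring.
      apply Z.divide_sub_r; [apply Z.divide_mul_r|]; assumption.
    + replace (k2 * dot m2 w - n) with (n * (dot m2 e2 - 1) - (n * dot m2 e2 + - k2 * dot m2 w)) by ring.
      apply Z.divide_sub_r; [apply Z.divide_mul_r|]; assumption.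
  - intros Hb. destruct (Hsurj 1 0 0) as [e1 [[s E11] [E12 E13]]].
    rewrite Z.sub_0_r in E12, E13. exists e1. intros u.
    exists (n * dot m1 u). apply HT. rewrite !dot_lc.
    split; [|split].
    + replace (n * dot m1 u + - (n * dot m1 u) * dot m1 e1)
        with (- (n * dot m1 u) * (dot m1 e1 - 1)) by ring.
      rewrite E11. exists (- (n * dot m1 u) * s). ring.
    + apply Z.divide_add_r; [apply Z.divide_mul_l; exact Hb|apply Z.divide_mul_r; exact E12].
    + apply Z.divide_add_r; [|apply Z.divide_mul_r; exact E13].
      apply Z.divide_mul_l. apply Z.divide_trans with (ppow b); assumption.
Qed.

Lemma cotype_unique T a b a3 a' b' a3' :
  has_cotype T (ppow a) (ppow b) a3 -> has_cotype T (ppow a') (ppow b') a3' -> a = a' /\ b = b'.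
Proof.
  intros H H'. split; apply Nat.le_antisymm; apply ppow_divide_inv.
  - apply (cotype_exponent _ _ _ _ _ H), (cotype_exponent _ _ _ _ _ H'), Z.divide_refl.
  - apply (cotype_exponent _ _ _ _ _ H'), (cotype_exponent _ _ _ _ _ H), Z.divide_refl.
  - apply (cotype_second _ _ _ _ _ H), (cotype_second _ _ _ _ _ H'), Z.divide_refl.
  - apply (cotype_second _ _ _ _ _ H'), (cotype_second _ _ _ _ _ H), Z.divide_refl.
Qed.

Lemma hnf_cotype_unit i j k t : (k < i)%nat -> (k < j)%nat -> ~ (p | t) ->
  has_cotype (hnf (ppow i) (ppow k * t) (ppow j)) (ppow (i + j - k)) (ppow k) 1.
Proof.
  intros Hki Hkj Ht. split; [lia|split; [apply Z.divide_1_l|split; [apply ppow_divide; lia|]]].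
  assert (Ej : ppow j = ppow (j - k) * ppow k) by (rewrite <- ppow_add; f_equal; lia).
  assert (Ei : ppow i = ppow (i - k) * ppow k) by (rewrite <- ppow_add; f_equal; lia).
  assert (Eijk : ppow (i + j - k) = ppow (j - k) * ppow i) by (rewrite <- ppow_add; f_equal; lia).
  exists (ppow (j - k), -t, 0), (1, 0, 0), (0, 0, 0). split.
  - intros y1 y2 y3.
    destruct (rel_prime_bezout _ _ (rel_prime_ppow t (i + j - k) Ht)) as [u v Huv].
    exists (y2, u * (ppow (j - k) * y2 - y1), 0). cbn [dot].
    split; [|split; [|apply Z.divide_1_l]].
    + exists ((ppow (j - k) * y2 - y1) * v).
      replace (ppow (j - k) * y2 + - t * (u * (ppow (j - k) * y2 - y1)) + 0 * 0 - y1)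
        with ((ppow (j - k) * y2 - y1) * (1 - u * t)) by ring.
      rewrite <- Huv. ring.
    + exists 0. ring.
  - intros [[x2 x1] x0]. cbn [dot hnf]. split.
    + intros [y [-> [r Hr]]]. split; [|split; [|apply Z.divide_1_l]].
      * exists r. rewrite Eijk, Ej.
        replace (ppow (j - k) * x2 + - t * (ppow (j - k) * ppow k * y) + 0 * x0)
          with (ppow (j - k) * (x2 - ppow k * t * y)) by ring. rewrite Hr. ring.
      * exists (r * ppow (i - k) + t * y).
        replace (1 * x2 + 0 * (ppow j * y) + 0 * x0) with ((x2 - ppow k * t * y) + ppow k * t * y) by ring.
        rewrite Hr, Ei. ring.
    + intros [[r Hr] [[s Hs] _]].
      assert (Hx2 : x2 = s * ppow k) by lia.
      assert (Htx : t * x1 = ppow j * (s - ppow (i - k) * r)).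
      { rewrite Eijk, Hx2, Ei in Hr. rewrite Ej in *. nia. }
      assert (Hdx : (ppow j | x1)).
      { apply (Gauss _ t); [rewrite Htx; apply Z.divide_factor_l|].
        apply rel_prime_sym, rel_prime_ppow; exact Ht. }
      destruct Hdx as [y Hy]. exists y. split; [lia|].
      assert (Hty : t * y = s - ppow (i - k) * r).
      { apply (Z.mul_reg_l _ _ (ppow j)); [pose proof (ppow_pos j); lia|].
        rewrite <- Htx, Hy. ring. }
      exists r. rewrite Hx2, Ei.
      replace (s * ppow k - ppow k * t * y) with (ppow k * (s - t * y)) by ring.
      rewrite Hty. ring.
Qed.

(* A subring S of cotype (p^a, p^b, _) is [hnf (p^i) be (p^j)] with i <= 2j and
   0 <= be < p^i: p^j generates the t-coordinates of S /\ (Z t^2 + Z t), p^i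
   generates S /\ Z t^2, and be is the reduced t^2-coordinate of the element with
   t-coordinate p^j; i <= 2j because that element squares to p^(2j) t^2. *)
Lemma subring_normal_form T a b a3 : is_subring T -> has_cotype T (ppow a) (ppow b) a3 ->
  exists i j be, (i <= 2 * j)%nat /\ 0 <= be < ppow i /\ same T (hnf (ppow i) be (ppow j)).
Proof.
  intros [_ [_ [H1 Hmul]]] Hc.
  assert (Hlc : forall u v k l, T u -> T v -> T (lc k u l v)) by (intros; eapply cotype_lc; eauto).
  assert (HA : forall u, T (smul (ppow a) u)) by (apply (cotype_exponent _ _ _ _ _ Hc), Z.divide_refl).
  destruct (ppow_generator (fun x1 => exists x2, T (x2, x1, 0)) a) as [j [[y0 Hy0] Hgen1]].
  { intros x y u v [x2 Hx] [y2 Hy]. exists (u * x2 + v * y2).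
    eapply mem_eq; [apply (Hlc _ _ u v Hx Hy)|triple_ring]. }
  { exists 0. eapply mem_eq; [apply (HA (0, 1, 0))|triple_ring]. }
  destruct (ppow_generator (fun x2 => T (x2, 0, 0)) a) as [i [Hi Hgen2]].
  { intros x y u v Hx Hy. eapply mem_eq; [apply (Hlc _ _ u v Hx Hy)|triple_ring]. }
  { eapply mem_eq; [apply (HA (1, 0, 0))|triple_ring]. }
  pose proof (ppow_pos i) as Hpi.
  set (be := y0 mod ppow i).
  assert (Hbe : T (be, ppow j, 0)).
  { eapply mem_eq; [apply (Hlc _ _ 1 (- (y0 / ppow i)) Hy0 Hi)|].
    cbn [lc radd smul]. apply triple_eq; try ring. subst be.
    rewrite (Z.div_mod y0 (ppow i)) at 1; lia. }
  exists i, j, be. split; [|split].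
  - apply ppow_divide_inv. replace (2 * j)%nat with (j + j)%nat by lia. rewrite ppow_add.
    apply Hgen2. eapply mem_eq; [apply (Hmul _ _ Hbe Hbe)|triple_ring].
  - apply Z.mod_pos_bound. exact Hpi.
  - intros [[x2 x1] x0]. cbn [hnf]. split.
    + intros Hu.
      assert (Hv : T (x2, x1, 0)) by (eapply mem_eq; [apply (Hlc _ _ 1 (- x0) Hu H1)|triple_ring]).
      destruct (Hgen1 x1 (ex_intro _ x2 Hv)) as [y ->]. exists y. split; [ring|].
      apply Hgen2. eapply mem_eq; [apply (Hlc _ _ 1 (- y) Hv Hbe)|triple_ring].
    + intros [y [-> [k Hk]]].
      eapply mem_eq; [apply (Hlc _ _ 1 x0 (Hlc _ _ y k Hbe Hi) H1)|].
      cbn [lc radd smul r1]. apply triple_eq; lia.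
Qed.

(* The residues modulo p^m (m >= 1) prime to p, listed as p q + r with 0 < r < p. *)
Definition units (m : nat) : list Z :=
  flat_map (fun q => map (fun r => p * q + r) (zrange 1 (Z.to_nat p - 1)))
           (zrange 0 (Z.to_nat (ppow (m - 1)))).

Lemma in_units t m : (1 <= m)%nat -> (In t (units m) <-> 0 <= t < ppow m /\ ~ (p | t)).
Proof.
  intros Hm. pose proof p_gt1.
  assert (Em : ppow m = p * ppow (m - 1)) by (rewrite <- ppow_S; f_equal; lia).
  pose proof (ppow_pos (m - 1)).
  unfold units. rewrite in_flat_map. split.
  - intros [q [Hq Ht]]. apply in_zrange in Hq. apply in_map_iff in Ht as [r [<- Hr]].
    apply in_zrange in Hr. split; [nia|].
    intros Hd. assert (Hpr : (p | r)).
    { replace r with ((p * q + r) - p * q) by ring.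
      apply Z.divide_sub_r; [exact Hd|apply Z.divide_factor_l]. }
    apply Z.divide_pos_le in Hpr; lia.
  - intros [Ht Hd]. exists (t / p). split.
    + apply in_zrange. split; [apply Z.div_pos; lia|].
      enough (t / p < ppow (m - 1)) by lia. apply Z.div_lt_upper_bound; lia.
    + apply in_map_iff. exists (t mod p). split; [rewrite (Z.div_mod t p) at 3; lia|].
      apply in_zrange. pose proof (Z.mod_pos_bound t p).
      destruct (Z.eq_dec (t mod p) 0); [|lia].
      exfalso. apply Hd, Z.mod_divide; lia.
Qed.

Lemma NoDup_units m : NoDup (units m).
Proof.
  pose proof p_gt1. unfold units. apply NoDup_flat_map.
  - apply NoDup_zrange.
  - intros q _. apply NoDup_map_NoDup_ForallPairs; [intros x y _ _ H'; lia|apply NoDup_zrange].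
  - intros x y z _ _ Hx Hy. apply in_map_iff in Hx as [r [<- Hr]], Hy as [r' [Hr' Hr2]].
    apply in_zrange in Hr, Hr2. nia.
Qed.

Lemma length_units m : (1 <= m)%nat -> Z.of_nat (length (units m)) = ppow m - ppow (m - 1).
Proof.
  intros Hm. pose proof p_gt1. pose proof (ppow_pos (m - 1)).
  unfold units. rewrite (flat_map_constant_length (c := (Z.to_nat p - 1)%nat)).
  - rewrite length_zrange, Nat2Z.inj_mul, Nat2Z.inj_sub, !Z2Nat.id by lia.
    replace m with (S (m - 1)) at 2 by lia. rewrite ppow_S. ring.
  - intros. rewrite length_map, length_zrange. reflexivity.
Qed.

Definition triple : Type := (nat * nat * Z)%type.
Definition hnf_of (tr : triple) : subset3 := let '(i, j, be) := tr in hnf (ppow i) be (ppow j).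
Definition valid (tr : triple) : Prop := let '(i, j, be) := tr in (i <= 2 * j)%nat /\ 0 <= be < ppow i.

(* The valid normal forms of cotype (p^a, p^b) fall into three families, according
   to the valuation k of be:
   - k >= j:           (a, b, p^b t), 0 <= t < p^(a-b), when b <= a <= 2b;
   - be = 0, i < j:    (b, a, 0), when b < a;
   - k = b < i, j:     (i, a+b-i, p^b t), t a unit mod p^(i-b), b < i <= [imax a b]. *)
Definition imax (a b : nat) : nat := Nat.min (a - 1) (2 * (a + b) / 3).

Definition fam_divisible (a b : nat) : list triple :=
  if andb (b <=? a)%nat (a <=? 2 * b)%nat
  then map (fun t => (a, b, ppow b * t)) (zrange 0 (Z.to_nat (ppow (a - b)))) else [].
Definition fam_zero (a b : nat) : list triple := if (b <? a)%nat then [(b, a, 0)] else [].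
Definition fam_unit (a b : nat) : list triple :=
  flat_map (fun i => map (fun t => (i, (a + b - i)%nat, ppow b * t)) (units (i - b)))
           (seq (b + 1) (imax a b - b)).
Definition normal_forms (a b : nat) : list triple := fam_divisible a b ++ fam_zero a b ++ fam_unit a b.

Lemma in_imax_range i a b :
  In i (seq (b + 1) (imax a b - b)) <-> (b < i /\ i < a /\ 3 * i <= 2 * (a + b))%nat.
Proof.
  rewrite in_seq. unfold imax.
  assert (Hdiv : forall x, (i <= x / 3 <-> 3 * i <= x)%nat).
  { intros x. split; intros H.
    - pose proof (Nat.Div0.mul_div_le x 3). lia.
    - apply Nat.div_le_lower_bound; lia. }
  pose proof (Hdiv (2 * (a + b))%nat). split; intros; lia.
Qed.

Lemma normal_forms_sound a b tr :
  In tr (normal_forms a b) -> valid tr /\ has_cotype (hnf_of tr) (ppow a) (ppow b) 1.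
Proof.
  pose proof (ppow_pos b) as Hpb.
  unfold normal_forms, fam_divisible, fam_zero, fam_unit.
  rewrite !in_app_iff. intros [H|[H|H]].
  - destruct (Nat.leb_spec b a), (Nat.leb_spec a (2 * b)); cbn [andb] in H; try contradiction.
    apply in_map_iff in H as [t [<- Ht]]. apply in_zrange in Ht.
    pose proof (ppow_pos (a - b)). rewrite Z2Nat.id in Ht by lia.
    split.
    + split; [lia|]. rewrite (ppow_split b a) by assumption. nia.
    + apply hnf_cotype_divisible, ppow_divide. assumption.
  - destruct (Nat.ltb_spec b a); [|contradiction].
    destruct H as [<-|[]]. split.
    + split; lia.
    + apply hnf_cotype_zero, ppow_divide. lia.
  - apply in_flat_map in H as [i [Hi H]]. apply in_imax_range in Hi.
    apply in_map_iff in H as [t [<- Ht]]. apply in_units in Ht as [Ht Hpt]; [|lia]. split.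
    + split; [lia|]. rewrite (ppow_split b i) by lia. nia.
    + replace (ppow a) with (ppow (i + (a + b - i) - b)) by (f_equal; lia).
      apply hnf_cotype_unit; [lia|lia|exact Hpt].
Qed.

Lemma normal_forms_complete tr : valid tr -> exists a b, In tr (normal_forms a b).
Proof.
  destruct tr as [[i j] be]. intros [Hij [Hb0 Hbi]].
  unfold normal_forms, fam_zero, fam_unit.
  assert (Hdivisible : forall t, (j <= i)%nat -> 0 <= t < ppow (i - j) ->
            In (i, j, ppow j * t) (fam_divisible i j)).
  { intros t Hji Ht. unfold fam_divisible.
    replace (andb (j <=? i)%nat (i <=? 2 * j)%nat) with true
      by (symmetry; apply andb_true_intro; split; apply Nat.leb_le; lia).
    apply in_map_iff. exists t. split; [reflexivity|]. apply in_zrange. lia. }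
  destruct (Z.eq_dec be 0) as [->|Hbe].
  - destruct (Nat.le_gt_cases j i).
    + exists i, j. rewrite !in_app_iff. left. replace (i, j, 0) with (i, j, ppow j * 0) by (f_equal; ring).
      apply Hdivisible; [assumption|].
      pose proof (ppow_pos (i - j)). lia.
    + exists j, i. rewrite !in_app_iff. right; left. destruct (Nat.ltb_spec i j); [simpl; auto|lia].
  - destruct (valuation be Hbe) as [k [t [Hkt Ht]]].
    pose proof (ppow_pos k). assert (Htp : 0 < t) by nia.
    assert (Hki : (k < i)%nat) by (apply ppow_lt_inv; nia).
    destruct (Nat.le_gt_cases j k).
    + exists i, j. rewrite !in_app_iff. left.
      rewrite Hkt, (ppow_split j k) by assumption. rewrite <- Z.mul_assoc.
      apply Hdivisible; [lia|]. pose proof (ppow_pos (k - j)). pose proof (ppow_pos j).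
      rewrite (ppow_split j i), (ppow_split j k) in * by lia. nia.
    + exists (i + j - k)%nat, k. rewrite !in_app_iff. right; right. apply in_flat_map. exists i. split.
      * apply in_imax_range. lia.
      * apply in_map_iff. exists t. split; [rewrite Hkt; do 2 f_equal; lia|].
        apply in_units; [lia|]. split; [|exact Ht]. split; [lia|].
        rewrite (ppow_split k i) in Hbi by lia. nia.
Qed.

Lemma hnf_of_inj t1 t2 : valid t1 -> valid t2 -> same (hnf_of t1) (hnf_of t2) -> t1 = t2.
Proof.
  destruct t1 as [[i j] be], t2 as [[i' j'] be']. intros [_ H1] [_ H2] Hs.
  destruct (hnf_inj _ _ _ _ _ _ (ppow_pos i) (ppow_pos j) H1 (ppow_pos i') (ppow_pos j') H2 Hs)
    as [Ei [-> Ej]].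
  apply ppow_inj in Ei, Ej. subst. reflexivity.
Qed.

Lemma NoDup_normal_forms a b : NoDup (normal_forms a b).
Proof.
  pose proof (ppow_pos b) as Hpb.
  assert (Hfst_unit : forall tr, In tr (fam_unit a b) -> (b < fst (fst tr) < a)%nat).
  { intros tr H. apply in_flat_map in H as [i [Hi H]]. apply in_imax_range in Hi.
    apply in_map_iff in H as [t [<- _]]. simpl. lia. }
  assert (Hfst_div : forall tr, In tr (fam_divisible a b) -> fst (fst tr) = a).
  { intros tr H. unfold fam_divisible in H. destruct (andb _ _); [|contradiction].
    apply in_map_iff in H as [t [<- _]]. reflexivity. }
  assert (Hfst_zero : forall tr, In tr (fam_zero a b) -> fst (fst tr) = b).
  { intros tr H. unfold fam_zero in H. destruct (_ <? _)%nat; [|contradiction].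
    destruct H as [<-|[]]. reflexivity. }
  unfold normal_forms. apply NoDup_app; [|apply NoDup_app|].
  - unfold fam_divisible. destruct (andb _ _); [|constructor].
    apply NoDup_map_NoDup_ForallPairs; [|apply NoDup_zrange].
    intros x y _ _ Hxy. inversion Hxy. nia.
  - unfold fam_zero. destruct (_ <? _)%nat; repeat constructor. auto.
  - unfold fam_unit. apply NoDup_flat_map.
    + apply seq_NoDup.
    + intros i _. apply NoDup_map_NoDup_ForallPairs; [|apply NoDup_units].
      intros x y _ _ Hxy. inversion Hxy. nia.
    + intros x y z _ _ Hx Hy. apply in_map_iff in Hx as [t [<- _]], Hy as [t' [Ht _]].
      inversion Ht. reflexivity.
  - intros tr H2 H3. apply Hfst_zero in H2. apply Hfst_unit in H3. lia.
  - intros tr H1 H23. pose proof (Hfst_div tr H1) as E1. apply in_app_or in H23 as [H2|H3].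
    + assert (b < a)%nat by (unfold fam_zero in H2; destruct (Nat.ltb_spec b a); [lia|contradiction]).
      apply Hfst_zero in H2. lia.
    + apply Hfst_unit in H3. lia.
Qed.

Definition subring_count (a b : nat) : Z :=
  (if andb (b <=? a)%nat (a <=? 2 * b)%nat then ppow (a - b) else 0)
  + (if (b <? a)%nat then 1 else 0) + (ppow (imax a b - b) - 1).

(* The unit family telescopes: sum over b < i <= n + b of (p^(i-b) - p^(i-b-1)). *)
Lemma length_fam_unit_prefix a b n :
  Z.of_nat (length (flat_map (fun i => map (fun t => (i, (a + b - i)%nat, ppow b * t)) (units (i - b)))
                              (seq (b + 1) n))) = ppow n - 1.
Proof.
  induction n as [|n IH]; [reflexivity|].
  rewrite seq_S, flat_map_app, length_app, Nat2Z.inj_add, IH. simpl flat_map.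
  rewrite app_nil_r, length_map, length_units by lia.
  replace (b + 1 + n - b)%nat with (S n) by lia. rewrite ppow_S.
  replace (S n - 1)%nat with n by lia. ring.
Qed.

Lemma length_normal_forms a b : Z.of_nat (length (normal_forms a b)) = subring_count a b.
Proof.
  unfold normal_forms, subring_count. rewrite !length_app, !Nat2Z.inj_add.
  unfold fam_unit at 1. rewrite length_fam_unit_prefix, Z.add_assoc. f_equal. f_equal.
  - unfold fam_divisible. destruct (andb _ _); [|reflexivity].
    rewrite length_map, length_zrange, Z2Nat.id; [reflexivity|].
    pose proof (ppow_pos (a - b)); lia.
  - unfold fam_zero. destruct (Nat.ltb b a); reflexivity.
Qed.

(* Writing d = a - b, the count splits as [count_divisible] (the first family) plus
   [count_other] (the other two families: 1 + (p^(imax a b - b) - 1)). *)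
Definition count_divisible (b d : nat) : Z := if (d <=? b)%nat then ppow d else 0.
Definition count_other (b d : nat) : Z :=
  if (d =? 0)%nat then 0 else ppow (Nat.min (d - 1) ((2 * d + b) / 3)).
Definition count_bd (b d : nat) : Z := count_divisible b d + count_other b d.

Lemma ppow_shift X Y k : X = (Y + k)%nat -> ppow X = p ^ Z.of_nat k * ppow Y.
Proof. intros ->. rewrite ppow_add, Z.mul_comm. reflexivity. Qed.

Lemma ppow_const X k : X = k -> ppow X = p ^ Z.of_nat k.
Proof. intros ->. reflexivity. Qed.

(* Decision procedure for the piecewise identities below: case on every nat test
   and [min], name the quotients by 3, express every [ppow e] either as a constant
   power of p or as a constant power times another [ppow e'] (all exponents differ
   by constants in each case), and finish with [ring]. *)
Ltac case_nat_tests :=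
  repeat (cbn [andb] in *; match goal with
  | |- context [Nat.leb ?x ?y] => destruct (Nat.leb_spec x y); try (exfalso; lia)
  | |- context [Nat.ltb ?x ?y] => destruct (Nat.ltb_spec x y); try (exfalso; lia)
  | |- context [Nat.eqb ?x ?y] => destruct (Nat.eqb_spec x y); try (exfalso; lia)
  | |- context [Nat.min ?x ?y] => let Hm := fresh in
        destruct (Nat.min_spec x y) as [[? Hm]|[? Hm]]; rewrite Hm in *; clear Hm;
        try (exfalso; lia)
  end); cbn [andb] in *.

Ltac name_div3 :=
  repeat match goal with
  | |- context [(?x / 3)%nat] =>
      let q := fresh "q" in let r := fresh "r" in
      pose proof (Nat.div_mod x 3 ltac:(lia)); pose proof (Nat.mod_upper_bound x 3 ltac:(lia));
      set (q := (x / 3)%nat) in *; set (r := (x mod 3)%nat) in *; clearbody q r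
  end.

Ltac ppow_constants :=
  repeat match goal with
  | |- context [ppow ?X] =>
      let rec go k := first [ rewrite (ppow_const X k) by lia
                            | lazymatch k with S ?k' => go k' end ] in go 6%nat
  end.

Ltac ppow_relate :=
  repeat match goal with
  | |- context [ppow ?X] => match goal with
    | |- context [ppow ?Y] => lazymatch X with Y => fail | _ =>
      let rec go k := first [ rewrite (ppow_shift X Y k) by lia
                            | lazymatch k with S ?k' => go k' end ] in go 6%nat end
    end
  end.

Ltac piecewise_ring :=
  name_div3; case_nat_tests; ppow_constants; ppow_relate; cbn [Z.of_nat Pos.of_succ_nat Pos.succ]; ring.

(* Coefficient access for shifted series: [shift F a b u v] is the coefficient of
   X^a Y^b in X^u Y^v F. *)
Definition shift (F : nat -> nat -> Z) (a b u v : nat) : Z :=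
  if andb (u <=? a)%nat (v <=? b)%nat then F (a - u)%nat (b - v)%nat else 0.

(* Coefficients of (1 - p X^2 Y)(1 - p^2 X^3) F = (1 - p X^2 Y - p^2 X^3 + p^3 X^5 Y) F. *)
Definition den2_coef (F : nat -> nat -> Z) (a b : nat) : Z :=
  F a b - p * shift F a b 2 1 - p ^ 2 * shift F a b 3 0 + p ^ 3 * shift F a b 5 1.

(* The same operator in the coordinates (b, d = a - b), where X^2 Y, X^3, X^5 Y
   become shifts by (1, 1), (0, 3), (1, 4). *)
Definition rec2 (H : nat -> nat -> Z) (b d : nat) : Z :=
  H b d - p * shift H b d 1 1 - p ^ 2 * shift H b d 0 3 + p ^ 3 * shift H b d 1 4.

Lemma count_divisible_rec b d :
  rec2 count_divisible b d = (if (d =? 0)%nat then 1 else 0) - (if (d =? 3)%nat then p ^ 2 else 0).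
Proof. unfold rec2, shift, count_divisible. piecewise_ring. Qed.

Lemma count_other_rec b d :
  rec2 count_other b d =
  if (b =? 0)%nat
  then (if (d =? 1)%nat then 1 else 0) + (if (d =? 2)%nat then p else 0) + (if (d =? 3)%nat then p ^ 2 else 0)
  else (if (d =? 1)%nat then 1 else 0) - (if (d =? 4)%nat then p ^ 2 else 0).
Proof. unfold rec2, shift, count_other. piecewise_ring. Qed.

Lemma subring_count_split a b :
  subring_count a b = if (b <=? a)%nat then count_bd b (a - b) else 0.
Proof. unfold subring_count, imax, count_bd, count_divisible, count_other. piecewise_ring. Qed.

Lemma shift_subring_count a b u v : (v <= u)%nat ->
  shift subring_count a b u v = if (b <=? a)%nat then shift count_bd b (a - b) v (u - v) else 0.
Proof.
  intros Hvu. unfold shift. rewrite subring_count_split.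
  destruct (Nat.leb_spec u a), (Nat.leb_spec v b), (Nat.leb_spec b a),
    (Nat.leb_spec (u - v) (a - b)), (Nat.leb_spec (b - v) (a - u)); cbn [andb]; try lia;
    try reflexivity.
  f_equal. lia.
Qed.

(* (1 - p X^2 Y)(1 - p^2 X^3) times the counting series is a series whose
   coefficients depend only on (b = 0?, d = a - b); it is the numerator of the
   theorem divided by (1 - XY). *)
Definition partial_num (a b : nat) : Z :=
  if (b <=? a)%nat then
    let d := (a - b)%nat in
    (if (d =? 0)%nat then 1 else 0) - (if (d =? 3)%nat then p ^ 2 else 0)
    + (if (b =? 0)%nat
       then (if (d =? 1)%nat then 1 else 0) + (if (d =? 2)%nat then p else 0) + (if (d =? 3)%nat then p ^ 2 else 0)
       else (if (d =? 1)%nat then 1 else 0) - (if (d =? 4)%nat then p ^ 2 else 0))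
  else 0.

Lemma den2_subring_count a b : den2_coef subring_count a b = partial_num a b.
Proof.
  unfold den2_coef, partial_num. rewrite !shift_subring_count by lia.
  rewrite subring_count_split. destruct (Nat.leb_spec b a); [|ring].
  transitivity (rec2 count_divisible b (a - b) + rec2 count_other b (a - b)).
  - unfold rec2, count_bd, shift. cbn [Nat.sub]. rewrite !Nat.sub_0_r.
    destruct (andb _ _), (andb _ _), (andb _ _); ring.
  - rewrite count_divisible_rec, count_other_rec. reflexivity.
Qed.

Definition den_expanded : fps :=
  fadd (mono 1 0 0) (fadd (mono (-1) 1 1) (fadd (mono (- p) 2 1) (fadd (mono (- p ^ 2) 3 0)
  (fadd (mono p 3 2) (fadd (mono (p ^ 2) 4 1) (fadd (mono (p ^ 3) 5 1) (mono (- p ^ 3) 6 2))))))).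

Lemma zeta_den_expanded i j : zeta_den p i j = den_expanded i j.
Proof.
  unfold zeta_den. rewrite fmul_fadd_l, !fmul_mono_l, !fmul_fadd_l, !fmul_mono_l.
  unfold den_expanded, fadd, mono.
  destruct i as [|[|[|[|[|[|[|i]]]]]]]; destruct j as [|[|[|j]]];
    cbn -[Z.mul Z.add Z.sub Z.opp Z.pow]; ring.
Qed.

Lemma fmul_zeta_den F a b :
  fmul (zeta_den p) F a b = den2_coef F a b - shift (den2_coef F) a b 1 1.
Proof.
  rewrite (fmul_ext _ den_expanded _ F); [|apply zeta_den_expanded|reflexivity].
  unfold den_expanded. rewrite !fmul_fadd_l, !fmul_mono_l. unfold den2_coef, shift.
  destruct a as [|[|[|[|[|[|[|a]]]]]]]; destruct b as [|[|[|b]]];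
    cbn -[Z.mul Z.add Z.sub Z.opp Z.pow]; ring.
Qed.

Lemma partial_num_numerator a b : partial_num a b - shift partial_num a b 1 1 = zeta_num p a b.
Proof.
  unfold partial_num, shift, zeta_num, fadd, mono. case_nat_tests; ring.
Qed.

Lemma count_subrings a b :
  count_is (fun S => is_subring S /\ exists a3, has_cotype S (ppow a) (ppow b) a3)
           (length (normal_forms a b)).
Proof.
  exists (map hnf_of (normal_forms a b)). split; [apply length_map|split; [|split]].
  - intros S HS. apply in_map_iff in HS as [[[i j] be] [<- Htr]].
    destruct (normal_forms_sound a b _ Htr) as [[Hij _] Hc].
    split; [|exists 1; exact Hc].
    refine (hnf_subring _ _ _ _ _ _ _ Hc). rewrite <- ppow_add. apply ppow_divide. lia.
  - intros S [Hsub [a3 Hc]].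
    destruct (subring_normal_form S a b a3 Hsub Hc) as [i [j [be [Hij [Hbe Hsame]]]]].
    destruct (normal_forms_complete (i, j, be)) as [a' [b' Hin]]; [split; assumption|].
    destruct (normal_forms_sound _ _ _ Hin) as [_ Hc'].
    destruct (cotype_unique _ _ _ _ _ _ _ (cotype_same _ _ _ _ _ Hc Hsame) Hc') as [-> ->].
    exists (hnf_of (i, j, be)). split; [apply in_map_iff; eauto|exact Hsame].
  - apply ForallOrdPairs_map_distinct; [apply NoDup_normal_forms|].
    intros x y Hx Hy. apply hnf_of_inj;
      [apply (normal_forms_sound a b x Hx)|apply (normal_forms_sound a b y Hy)].
Qed.

Lemma zeta_identity a b :
  fmul (zeta_den p) (fun i j => Z.of_nat (length (normal_forms i j))) a b = zeta_num p a b.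
Proof.
  rewrite (fmul_ext _ (zeta_den p) _ subring_count); [|reflexivity|apply length_normal_forms].
  rewrite fmul_zeta_den.
  replace (shift (den2_coef subring_count) a b 1 1) with (shift partial_num a b 1 1)
    by (unfold shift; destruct (andb _ _); [symmetry; apply den2_subring_count|reflexivity]).
  rewrite den2_subring_count. apply partial_num_numerator.
Qed.

End PrimePowers.

Theorem theorem2 (p : Z) (hp : prime p) :
  exists N : nat -> nat -> nat,
    (forall a b : nat,
       count_is (fun S => is_subring S /\
                   exists a3 : Z, has_cotype S (p ^ Z.of_nat a) (p ^ Z.of_nat b) a3)
                (N a b)) /\
    (forall a b : nat,
       fmul (zeta_den p) (fun i j => Z.of_nat (N i j)) a b = zeta_num p a b).
Proof.
  exists (fun a b => length (normal_forms p a b)).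
  split; intros a b; [exact (count_subrings p hp a b)|exact (zeta_identity p hp a b)].
Qed.
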